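(* Let $\mathbf{G}$ be a linear operator on $\mathbb{R}^{n_1\times\cdots\times n_d}$ and consider the explicit $s$-step linear multistep method $\mathbf{u}^{k+s}+\sum_{j=0}^{s-1}a_j\mathbf{u}^{k+j}=\Delta t\sum_{j=0}^{s-1}b_j\mathbf{G}\mathbf{u}^{k+j}$, written as the one-step recurrence $\mathbf{v}^{k+1}=\mathbf{L}_{\Delta t}\mathbf{v}^{k}$ with $\mathbf{v}^{k+1}=(\mathbf{u}^{k+s},\mathbf{u}^{k+s-1},\dots,\mathbf{u}^{k+1})$ and $$\mathbf{L}_{\Delta t}=\begin{bmatrix} b_{s-1}\Delta t\mathbf{G}-a_{s-1}\mathbf{I} & \cdots & b_1\Delta t\mathbf{G}-a_1\mathbf{I} & b_0\Delta t\mathbf{G}-a_0\mathbf{I}\\ \mathbf{I}&\cdots&\mathbf{0}&\mathbf{0}\\ \vdots&\ddots&\vdots&\vdots\\ \mathbf{0}&\cdots&\mathbf{I}&\mathbf{0}\end{bmatrix}.$$ Suppose this linear scheme is Lax-stable, i.e. there is a constant $K$ with $\|\mathbf{L}_{\Delta t}\|_2\le 1+K\Delta t$. Then the rank-truncated scheme $\mathbf{v}^{k+1}=\mathfrak{T}_r(\mathbf{L}_{\Delta t}\mathbf{v}^{k})$ is stable: for every $T>0$ there is a constant $C_T$ (one may take $C_T=e^{KT}$) such that $\|\mathbf{v}^{k}\|_2\le C_T\|\mathbf{v}^{0}\|_2$ for all $k$ with $k\Delta t\le T$.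
   Context: $\|\cdot\|_2$ on tensors (and on block vectors of tensors) is the Euclidean norm of all entries, and $\|\mathbf{L}_{\Delta t}\|_2$ is the induced operator norm. $\mathfrak{T}_r$ is the hierarchical (HOSVD-based) rank-$r$ truncation operator with respect to a fixed dimension tree $\mathcal{T}_d$ and target ranks $r=(r_t)$, applied to each tensor block of the block vector. For a single tensor, $\mathfrak{T}_r(\mathbf{x})=\prod_{t\in\mathcal{T}_d^{p}}\mathbf{P}_t\cdots\prod_{t\in\mathcal{T}_d^{1}}\mathbf{P}_t\,\mathbf{x}$, where $\mathcal{T}_d^l$ is the set of tree nodes at distance $l$ from the root, $p$ is the tree depth, and each $\mathbf{P}_t$ (depending on $\mathbf{x}$) is the orthogonal projection acting on the $t$-mode matricization $\mathbf{x}^{(t)}$ (rows indexed by the modes in $t$) onto the span of its leading $r_t$ left singular vectors. *)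

From HB Require Import structures.
From mathcomp Require Import all_boot all_order all_algebra.
From mathcomp Require Import reals.
Set Implicit Arguments. Unset Strict Implicit. Unset Printing Implicit Defensive.
Import Order.TTheory GRing.Theory Num.Theory.
Local Open Scope ring_scope.

(* A binary dimension tree: leaves are single modes, internal nodes have two
   children; a node t is identified with the set of modes (leaves) below it. *)
Inductive dtree (d : nat) : Type :=
| DLeaf of 'I_d
| DNode of dtree d & dtree d.
Arguments DLeaf {d}.
Arguments DNode {d}.

Section DimTree.
Variable d : nat.

Fixpoint dt_leaves (T : dtree d) : seq 'I_d :=
  match T with
  | DLeaf i => [:: i]
  | DNode l r => dt_leaves l ++ dt_leaves r
  end.

Definition dt_modes (T : dtree d) : {set 'I_d} := [set i in dt_leaves T].

Definition dimension_tree (T : dtree d) : Prop :=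
  perm_eq (dt_leaves T) (enum 'I_d).

Fixpoint dt_depth (T : dtree d) : nat :=
  match T with
  | DLeaf _ => 0
  | DNode l r => (maxn (dt_depth l) (dt_depth r)).+1
  end.

Fixpoint dt_level (T : dtree d) (l : nat) : seq {set 'I_d} :=
  match l, T with
  | 0, _ => [:: dt_modes T]
  | k.+1, DLeaf _ => [::]
  | k.+1, DNode tl tr => dt_level tl k ++ dt_level tr k
  end.
End DimTree.

Section Tensors.
Variable R : realType.
Variable d : nat.
Variable n : 'I_d -> nat.

Definition Idx := {dffun forall i : 'I_d, 'I_(n i)}.
(* tensors in R^{n_1 x ... x n_d}; R^o is R seen as a module over itself,
   so that tensors form an R-vector space *)
Definition Tensor := {ffun Idx -> R^o}.

Definition Rows (t : {set 'I_d}) := {dffun forall i : {i : 'I_d | i \in t}, 'I_(n (val i))}.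
Definition Cols (t : {set 'I_d}) := {dffun forall i : {i : 'I_d | i \notin t}, 'I_(n (val i))}.

Definition rowpart t (al : Idx) : Rows t := [ffun j => al (val j)].
Definition colpart t (al : Idx) : Cols t := [ffun j => al (val j)].

Definition combine t (a : Rows t) (b : Cols t) : Idx :=
  [ffun i => match boolP (i \in t) with
             | AltTrue h => a (exist _ i h)
             | AltFalse h => b (exist _ i h)
             end].

Definition matricize t (x : Tensor) : 'M[R]_(#|Rows t|, #|Cols t|) :=
  \matrix_(i, j) x (combine (enum_val i) (enum_val j)).

Definition tensorize t (M : 'M[R]_(#|Rows t|, #|Cols t|)) : Tensor :=
  [ffun al => M (enum_rank (rowpart t al)) (enum_rank (colpart t al))].

Definition apply_mode t (P : 'M[R]_(#|Rows t|)) (y : Tensor) : Tensor :=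
  tensorize (P *m matricize t y).

(* P is the orthogonal projection onto the span of the leading r left singular
   vectors of M, for some singular value decomposition M = U S V^T
   (U, V orthogonal, S rectangular diagonal with nonnegative nonincreasing
   diagonal entries). *)
Definition leading_left_proj p q (M : 'M[R]_(p, q)) (r : nat) (P : 'M[R]_p) : Prop :=
  exists (U : 'M[R]_p) (V : 'M[R]_q) (sv : nat -> R),
    [/\ U^T *m U = 1%:M, V^T *m V = 1%:M,
        (forall i, 0 <= sv i) /\ (forall i j, (i <= j)%N -> sv j <= sv i),
        M = U *m (\matrix_(i < p, j < q) (if (i : nat) == j then sv i else 0)) *m V^T
      & P = \sum_(i < p | (i < r)%N) col i U *m (col i U)^T].

(* The hierarchical (HOSVD-based) rank-r truncation:
   y = prod_{t in T^p} P_t ... prod_{t in T^1} P_t x, where every P_t is the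
   projection computed from the matricization x^{(t)} of the input x.
   Since the leading singular vectors need not be unique, this is a relation. *)
Definition apply_level (P : forall t : {set 'I_d}, 'M[R]_(#|Rows t|))
    (ts : seq {set 'I_d}) (y : Tensor) : Tensor :=
  foldl (fun z t => apply_mode (P t) z) y ts.

Definition is_truncation (T : dtree d) (r : {set 'I_d} -> nat) (x y : Tensor) : Prop :=
  exists P : forall t : {set 'I_d}, 'M[R]_(#|Rows t|),
    (forall l t, (1 <= l <= dt_depth T)%N -> t \in dt_level T l ->
        leading_left_proj (matricize t x) (r t) (P t)) /\
    y = foldl (fun z l => apply_level P (dt_level T l) z) x (iota 1 (dt_depth T)).

Variable s : nat.
Definition Block := {ffun 'I_s -> Tensor}.

Definition bnorm (v : Block) : R :=
  Num.sqrt (\sum_(j < s) \sum_(al : Idx) (v j al) ^+ 2).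

(* previous block index i-1 (only used for i >= 1) *)
Definition prev_ix (i : 'I_s) : 'I_s := insubd i i.-1.

(* L_{dt} v, with v = (v_0, ..., v_{s-1}) = (u^{k+s-1}, ..., u^k):
   (L v)_0 = sum_j (b_{s-1-j} dt G - a_{s-1-j} I) v_j ,  (L v)_i = v_{i-1}. *)
Definition Lop (a b : nat -> R) (G : Tensor -> Tensor) (dt : R) (v : Block) : Block :=
  [ffun i : 'I_s => if (i : nat) == 0%N then
        \sum_(j < s) ((b (s - j.+1)%N * dt) *: G (v j) - a (s - j.+1)%N *: v j)
      else v (prev_ix i)].

Definition opnorm_le (L : Block -> Block) (c : R) : Prop :=
  forall v, bnorm (L v) <= c * bnorm v.

Definition trunc_step (T : dtree d) (r : {set 'I_d} -> nat) (w v' : Block) : Prop :=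
  forall j : 'I_s, is_truncation T r (w j) (v' j).
End Tensors.

Arguments Lop {R d n} s a b G dt v.
Arguments bnorm {R d n s} v.
Arguments trunc_step {R d n s} T r w v'.
Arguments opnorm_le {R d n s} L c.
Arguments Block R {d} n s.
Arguments Tensor R {d} n.

From HB Require Import structures.
From mathcomp Require Import all_boot all_order all_algebra.
From mathcomp Require Import reals.
From mathcomp Require Import sequences exp.
Import Order.TTheory GRing.Theory Num.Theory.
Local Open Scope ring_scope.
Set Implicit Arguments. Unset Strict Implicit. Unset Printing Implicit Defensive.

(* Every projection P_t in the truncation is orthogonal, so multiplying a
   matricization by it does not increase the Frobenius norm, which is the
   Euclidean norm of the tensor.  Hence truncation is nonexpansive, the
   truncated scheme inherits the bound ||v^{k+1}|| <= (1 + |K| dt) ||v^k|| of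
   the linear one, and ||v^k|| <= (1 + |K| dt)^k ||v^0|| <= e^{|K| T} ||v^0||
   whenever k dt <= T. *)

Section Frobenius.
Variable R : realType.

Definition frob2 p q (A : 'M[R]_(p, q)) : R := \sum_i \sum_j A i j ^+ 2.

Lemma frob2_tr p q (A : 'M[R]_(p, q)) : frob2 A = \tr (A^T *m A).
Proof.
rewrite /frob2 /mxtrace exchange_big /=; apply: eq_bigr => j _.
by rewrite !mxE; apply: eq_bigr => i _; rewrite !mxE expr2.
Qed.

Lemma frob2_orthogonal_mull p q (U : 'M[R]_p) (X : 'M[R]_(p, q)) :
  U^T *m U = 1%:M -> frob2 (U *m X) = frob2 X.
Proof. by move=> hU; rewrite !frob2_tr trmx_mul !mulmxA -(mulmxA X^T) hU mulmx1. Qed.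

Lemma frob2_diag_bool_mull p q (c : 'I_p -> bool) (X : 'M[R]_(p, q)) :
  frob2 (diag_mx (\row_i (c i)%:R) *m X) <= frob2 X.
Proof.
rewrite /frob2 mul_diag_mx; apply: ler_sum => i _; apply: ler_sum => j _.
by rewrite !mxE; case: (c i); rewrite ?mul1r // mul0r expr0n sqr_ge0.
Qed.

Lemma sum_col_outer_diag m p (U : 'M[R]_(m, p)) (r : nat) :
  \sum_(i < p | (i < r)%N) col i U *m (col i U)^T
    = U *m diag_mx (\row_i (i < r)%:R) *m U^T.
Proof.
apply/matrixP => a b; rewrite summxE !mxE [RHS](bigID (fun i : 'I_p => (i < r)%N)) /=.
rewrite [X in _ = _ + X]big1 ?addr0 => [|i /negbTE hi]; last first.
  by rewrite mul_mx_diag !mxE hi mulr0 mul0r.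
by apply: eq_bigr => i hi; rewrite mul_mx_diag !mxE big_ord1 !mxE hi mulr1.
Qed.

Lemma frob2_leading_left_proj_mull p q q' (M : 'M[R]_(p, q)) (X : 'M[R]_(p, q'))
    (r : nat) (P : 'M[R]_p) :
  leading_left_proj M r P -> frob2 (P *m X) <= frob2 X.
Proof.
case=> U [V [sv [hU _ _ _ ->]]]; rewrite sum_col_outer_diag -!mulmxA.
have hUt : U^T^T *m U^T = 1%:M by rewrite trmxK; apply: mulmx1C.
rewrite frob2_orthogonal_mull //.
by apply: le_trans (frob2_diag_bool_mull _ _) _; rewrite frob2_orthogonal_mull.
Qed.
End Frobenius.

Section Matricization.
Variables (R : realType) (d : nat) (n : 'I_d -> nat) (t : {set 'I_d}).

Definition tnorm2 (x : Tensor R n) : R := \sum_(al : Idx n) x al ^+ 2.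

Lemma rowpart_combine (a : Rows n t) (b : Cols n t) : rowpart t (combine a b) = a.
Proof.
apply/ffunP => -[j hj]; rewrite !ffunE /=.
case: {-}_ / (boolP (j \in t)) => h; last by have := h; rewrite hj.
by have -> : h = hj by exact: bool_irrelevance.
Qed.

Lemma colpart_combine (a : Rows n t) (b : Cols n t) : colpart t (combine a b) = b.
Proof.
apply/ffunP => -[j hj]; rewrite !ffunE /=.
case: {-}_ / (boolP (j \in t)) => h; first by have := h; rewrite (negbTE hj).
by have -> : h = hj by exact: bool_irrelevance.
Qed.

Lemma combine_parts (al : Idx n) : combine (rowpart t al) (colpart t al) = al.
Proof. by apply/ffunP => i; rewrite !ffunE; case: {-}_ / (boolP (i \in t)) => h; rewrite ffunE. Qed.

Lemma matricizeK (M : 'M[R]_(#|Rows n t|, #|Cols n t|)) :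
  matricize t (tensorize M) = M.
Proof.
by apply/matrixP => i j; rewrite mxE ffunE rowpart_combine colpart_combine !enum_valK.
Qed.

Lemma frob2_matricize (y : Tensor R n) : frob2 (matricize t y) = tnorm2 y.
Proof.
rewrite /frob2 /tnorm2 pair_bigA /=.
rewrite [RHS](reindex (fun p : 'I_#|Rows n t| * 'I_#|Cols n t| =>
  combine (enum_val p.1) (enum_val p.2))) /=.
  by apply: eq_bigr => -[i j] _; rewrite mxE.
exists (fun al => (enum_rank (rowpart t al), enum_rank (colpart t al))) => [[i j] _|al _].
  by rewrite rowpart_combine colpart_combine !enum_valK.
by rewrite !enum_rankK combine_parts.
Qed.

Lemma tnorm2_apply_mode_le q (M : 'M[R]_(#|Rows n t|, q)) r P (y : Tensor R n) :
  leading_left_proj M r P -> tnorm2 (apply_mode P y) <= tnorm2 y.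
Proof.
move=> hP; rewrite /apply_mode -frob2_matricize matricizeK -frob2_matricize.
exact: frob2_leading_left_proj_mull hP.
Qed.
End Matricization.

Lemma measure_foldl_le (X : eqType) (Y : Type) (R : realType) (N : Y -> R)
    (f : Y -> X -> Y) (s : seq X) :
  (forall x, x \in s -> forall y, N (f y x) <= N y) -> forall y, N (foldl f y s) <= N y.
Proof.
elim: s => [|x s IH] hs y //=.
apply: le_trans (IH _ _) (hs x (mem_head _ _) y) => z hz.
by apply: hs; rewrite in_cons hz orbT.
Qed.

Section Truncation.
Variables (R : realType) (d : nat) (n : 'I_d -> nat).

Lemma tnorm2_truncation_le (T : dtree d) r (x y : Tensor R n) :
  is_truncation T r x y -> tnorm2 y <= tnorm2 x.
Proof.
case=> P [hP ->]; apply: measure_foldl_le => l; rewrite mem_iota add1n ltnS => hl z.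
by apply: measure_foldl_le => t ht z'; apply: tnorm2_apply_mode_le (hP l t hl ht).
Qed.

Lemma bnorm_trunc_step_le s (T : dtree d) r (w v' : Block R n s) :
  trunc_step T r w v' -> bnorm v' <= bnorm w.
Proof.
move=> h; rewrite ler_sqrt; last by do 2![apply: sumr_ge0 => ? _]; apply: sqr_ge0.
by apply: ler_sum => j _; apply: tnorm2_truncation_le (h j).
Qed.
End Truncation.

Section Growth.
Variable R : realType.

Lemma seq_le_geometric (u : nat -> R) (q : R) :
  0 <= q -> (forall k, u k.+1 <= q * u k) -> forall k, u k <= q ^+ k * u 0%N.
Proof.
move=> q0 hu; elim=> [|k IH]; first by rewrite mul1r.
by apply: le_trans (hu k) _; rewrite exprS -mulrA ler_wpM2l.
Qed.

Lemma exprn_1Dx_le_expR (x : R) (k : nat) : 0 <= 1 + x -> (1 + x) ^+ k <= expR (k%:R * x).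
Proof.
move=> x1; rewrite expRM_natl; apply: lerXn2r; rewrite ?nnegrE ?expR_ge0 //.
exact: expR_ge1Dx.
Qed.
End Growth.

Theorem theorem3p2 (R : realType) (d : nat) (n : 'I_d -> nat)
    (T : dtree d) (r : {set 'I_d} -> nat) (s : nat) (a b : nat -> R)
    (G : {linear Tensor R n -> Tensor R n}) (K dt0 : R) :
  dimension_tree T -> (0 < s)%N -> 0 < dt0 ->
  (forall dt, 0 < dt <= dt0 -> opnorm_le (Lop s a b G dt) (1 + K * dt)) ->
  forall Tf : R, 0 < Tf ->
  exists CT : R,
    forall dt, 0 < dt <= dt0 ->
    forall v : nat -> Block R n s,
      (forall k, trunc_step T r (Lop s a b G dt (v k)) (v k.+1)) ->
      forall k : nat, k%:R * dt <= Tf -> bnorm (v k) <= CT * bnorm (v 0%N).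
Proof.
move=> _ _ _ hL Tf _; exists (expR (`|K| * Tf)) => dt hdt v hv k hk.
have dt_ge0 : 0 <= dt by case/andP: hdt => /ltW.
have growth_ge0 : 0 <= 1 + `|K| * dt by rewrite addr_ge0 // mulr_ge0.
have step k' : bnorm (v k'.+1) <= (1 + `|K| * dt) * bnorm (v k').
  apply: le_trans (bnorm_trunc_step_le (hv k')) (le_trans (hL _ hdt _) _).
  by rewrite ler_wpM2r ?sqrtr_ge0 // lerD2l ler_wpM2r // ler_norm.
apply: le_trans (seq_le_geometric growth_ge0 step k) _.
rewrite ler_wpM2r ?sqrtr_ge0 //; apply: le_trans (exprn_1Dx_le_expR _ growth_ge0) _.
by rewrite ler_expR mulrCA ler_wpM2l.
Qed.
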